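(* Let $\mathbb{L}=(\mathcal{P},\mathcal{C},\parallel)$ be a miquelian Laguerre plane of characteristic $2$. If $K,L,M$ are circles, $p$ is a point with $p\in K$ and $p\in L$, and each of $K$ and $L$ is tangent to $M$, then $K$ and $L$ are tangent at $p$.
   Context: A Laguerre plane is a triple $(\mathcal{P},\mathcal{C},\parallel)$ where $\mathcal{P}$ is a set of points, $\mathcal{C}\subset 2^{\mathcal{P}}$ a set of circles and $\parallel$ an equivalence relation on $\mathcal{P}$ (parallelism; its classes are called generators) such that: (1) any three pairwise non-parallel points lie on a unique circle; (2) for every circle $K$ and non-parallel points $p\in K$, $q\notin K$ there is exactly one circle $L$ with $q\in L$ and $K\cap L=\{p\}$; (3) for every point $p$ and circle $K$ there is exactly one point $q\in K$ with $q\parallel p$; (4) some circle contains at least three but not all points. Circles $K,L$ are tangent at $p$ if $K\cap L=\{p\}$ or $K=L$ (with $p\in K$); $K$ and $L$ are tangent if they are tangent at some point. A quadruple $(a,b,c,d)$ of points is concyclic, written $(a,b,c,d)_{\triangle}$, if $a,b,c,d$ lie on a common circle, or $a\parallel b$, $c\parallel d$ and $a\nparallel c$. The plane is miquelian if it satisfies Miquel's condition: for any eight distinct points $a,b,c,d,e,f,g,h$, the relations $(a,c,b,d)_{\triangle}$, $(a,e,b,h)_{\triangle}$, $(a,g,d,h)_{\triangle}$, $(b,f,c,e)_{\triangle}$, $(c,g,d,f)_{\triangle}$ imply $(e,g,f,h)_{\triangle}$. Miquelian Laguerre planes are exactly the classical ones over commutative fields $F$ (plane sections of a quadratic cone in the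 projective space over $F$); the characteristic of the plane is the characteristic of $F$. *)

From Stdlib Require List.
From HB Require Import structures.
From mathcomp Require Import all_boot all_algebra.
Set Implicit Arguments. Unset Strict Implicit. Unset Printing Implicit Defensive.
Import GRing.Theory.
Local Open Scope ring_scope.

(* An incidence structure (P, C, par): points of type P, circles are subsets
   of P (predicates) belonging to the set C, par is the parallelism. *)
Section Laguerre.
Variables (P : Type) (C : (P -> Prop) -> Prop) (par : P -> P -> Prop).

Record laguerre_plane : Prop := {
  par_refl : forall p, par p p;
  par_sym : forall p q, par p q -> par q p;
  par_trans : forall p q r, par p q -> par q r -> par p r;
  lp_join : forall a b c, ~ par a b -> ~ par a c -> ~ par b c ->
    (exists K, C K /\ K a /\ K b /\ K c) /\
    (forall K L, C K -> K a -> K b -> K c -> C L -> L a -> L b -> L c -> K = L);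
  lp_touch : forall K p q, C K -> K p -> ~ K q -> ~ par p q ->
    (exists L, C L /\ L q /\ (forall x, K x /\ L x <-> x = p)) /\
    (forall L1 L2, C L1 -> L1 q -> (forall x, K x /\ L1 x <-> x = p) ->
                   C L2 -> L2 q -> (forall x, K x /\ L2 x <-> x = p) -> L1 = L2);
  lp_proj : forall p K, C K ->
    (exists q, K q /\ par q p) /\
    (forall q1 q2, K q1 -> par q1 p -> K q2 -> par q2 p -> q1 = q2);
  lp_rich : exists K, C K /\
    (exists a b c, K a /\ K b /\ K c /\ a <> b /\ a <> c /\ b <> c) /\
    (exists x, ~ K x)
}.

Definition concyclic (a b c d : P) : Prop :=
  (exists K, C K /\ K a /\ K b /\ K c /\ K d) \/
  (par a b /\ par c d /\ ~ par a c).

Definition miquelian : Prop :=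
  forall a b c d e f g h : P,
    List.NoDup [:: a; b; c; d; e; f; g; h] ->
    concyclic a c b d -> concyclic a e b h -> concyclic a g d h ->
    concyclic b f c e -> concyclic c g d f -> concyclic e g f h.

Definition tangent_at (K L : P -> Prop) (p : P) : Prop :=
  K p /\ L p /\ (K = L \/ (forall x, K x /\ L x -> x = p)).

Definition tangent (K L : P -> Prop) : Prop := exists p, tangent_at K L p.

End Laguerre.

(* The classical (miquelian) Laguerre plane over a commutative field F:
   points (F \cup {oo}) x F, with (None, y) the points over oo; circles are
   the graphs of x |-> a x^2 + b x + c extended by the point (oo, a);
   parallel points have the same first coordinate. *)
Section Classical.
Variable F : fieldType.

Definition cl_point := (option F * F)%type.

Definition cl_par (p q : cl_point) : Prop := p.1 = q.1.

Definition cl_circle (a b c : F) (p : cl_point) : Prop :=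
  match p.1 with
  | Some x => p.2 = a * x ^+ 2 + b * x + c
  | None => p.2 = a
  end.

Definition cl_circles (K : cl_point -> Prop) : Prop :=
  exists a b c, K = cl_circle a b c.

End Classical.

Definition iso_classical (P : Type) (C : (P -> Prop) -> Prop)
    (par : P -> P -> Prop) (F : fieldType) (f : P -> cl_point F) : Prop :=
  bijective f /\
  (forall p q, par p q <-> cl_par (f p) (f q)) /\
  (forall K : P -> Prop, C K <-> cl_circles (fun z => exists p, K p /\ f p = z)).

Definition plane_char (P : Type) (C : (P -> Prop) -> Prop)
    (par : P -> P -> Prop) (n : nat) : Prop :=
  exists (F : fieldType) (f : P -> cl_point F),
    (n \in [pchar F])%R /\ iso_classical C par f.

(* In characteristic 2 two circles are
   tangent exactly when they have the same linear coefficient b: for equal b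
   the difference (a - a') x^2 + (c - c') of two circles through x0 equals
   (a - a') (x - x0)^2, so distinct such circles meet only once; for b <> b'
   a common point x0 has a second partner x0 - (b - b')/(a - a'), or the
   point at oo when a = a'.  Hence tangency is transitive, and K and L, both
   tangent to M, are tangent to each other, necessarily at their common
   point p. *)
From mathcomp Require Import all_boot all_algebra.
From mathcomp Require Import ring.
From Stdlib Require Import FunctionalExtensionality PropExtensionality.

Set Implicit Arguments.
Unset Strict Implicit.
Unset Printing Implicit Defensive.
Import GRing.Theory.
Local Open Scope ring_scope.

Section ClassicalPlane.
Variable F : fieldType.

Definition cl_quad (a b c x : F) : F := a * x ^+ 2 + b * x + c.

Lemma cl_circle_inj (a b c a' b' c' : F) :
  cl_circle a b c = cl_circle a' b' c' -> [/\ a = a', b = b' & c = c'].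
Proof.
move=> e.
have ea : a = a' by have : cl_circle a' b' c' (None, a) by rewrite -e.
have val x : cl_quad a b c x = cl_quad a' b' c' x.
  by have : cl_circle a' b' c' (Some x, cl_quad a b c x) by rewrite -e.
have ec : c = c' by have := val 0; rewrite /cl_quad expr0n !mulr0 !add0r.
split=> //; have := val 1; rewrite /cl_quad expr1n !mulr1 ea ec.
by move/addIr/addrI.
Qed.

Lemma cl_circle_meetP (a b c a' b' c' : F) (z : cl_point F) :
  cl_circle a b c z /\ cl_circle a' b' c' z <->
  (exists2 x, z = (Some x, cl_quad a b c x) &
              cl_quad (a - a') (b - b') (c - c') x = 0)
  \/ (z = (None, a) /\ a = a').
Proof.
have quadB x : cl_quad (a - a') (b - b') (c - c') x =
               cl_quad a b c x - cl_quad a' b' c' x by rewrite /cl_quad; ring.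
case: z => [[x|] y]; rewrite /cl_circle /=; split.
- move=> [-> e]; left; exists x => //.
  by rewrite quadB; apply/eqP; rewrite subr_eq0; apply/eqP.
- case=> [[x' [-> ->]] | [] //]; rewrite quadB => /eqP; rewrite subr_eq0.
  by move/eqP.
- by move=> [-> ->]; right.
- by case=> [[] // | [[->] ->]].
Qed.

Hypothesis two0 : 2%:R = 0 :> F.

Lemma cl_quad_shift (a b c x d : F) :
  cl_quad a b c (x + d) = cl_quad a b c x + d * (a * d + b).
Proof.
have -> : cl_quad a b c (x + d) =
          cl_quad a b c x + d * (a * d + b) + 2%:R * (a * x * d).
  by rewrite /cl_quad; ring.
by rewrite two0 mul0r addr0.
Qed.

Lemma cl_meet_other (a b c a' b' c' : F) (z0 : cl_point F) :
  b != b' -> cl_circle a b c z0 -> cl_circle a' b' c' z0 ->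
  exists2 z, cl_circle a b c z /\ cl_circle a' b' c' z & z <> z0.
Proof.
move=> nb Kz0 Lz0; have db : b - b' != 0 by rewrite subr_eq0.
have [ea | na] := eqVneq a a'.
  have inf : cl_circle a b c (None, a) /\ cl_circle a' b' c' (None, a).
    by apply/cl_circle_meetP; right.
  pose x := (c' - c) / (b - b').
  have fin : cl_circle a b c (Some x, cl_quad a b c x) /\
             cl_circle a' b' c' (Some x, cl_quad a b c x).
    by apply/cl_circle_meetP; left; exists x; rewrite // /cl_quad ea /x; field.
  case: z0 {Kz0 Lz0} => [[x0|] y0]; first by exists (None, a).
  by exists (Some x, cl_quad a b c x).
have da : a - a' != 0 by rewrite subr_eq0.
case/cl_circle_meetP: (conj Kz0 Lz0) => [[x0 -> q0] | [_ ea]]; last first.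
  by rewrite ea eqxx in na.
pose d := - ((b - b') / (a - a')).
exists (Some (x0 + d), cl_quad a b c (x0 + d)).
  apply/cl_circle_meetP; left; exists (x0 + d) => //.
  have slope : (a - a') * d + (b - b') = 0 by rewrite /d; field.
  by rewrite cl_quad_shift q0 add0r slope mulr0.
case=> /eqP; rewrite -subr_eq0 addrAC subrr add0r oppr_eq0 mulf_eq0 invr_eq0.
by rewrite (negPf da) (negPf db).
Qed.

Lemma cl_tangent_at_same_lin (a b c a' b' c' : F) (z0 : cl_point F) :
  tangent_at (cl_circle a b c) (cl_circle a' b' c') z0 -> b = b'.
Proof.
move=> [Kz0 [Lz0 [/cl_circle_inj [_ -> _] // | uniq_z0]]].
have [// | nb] := eqVneq b b'.
by have [z /uniq_z0] := cl_meet_other nb Kz0 Lz0.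
Qed.

Lemma cl_same_lin_tangent_at (a b c a' c' : F) (z0 : cl_point F) :
  cl_circle a b c z0 -> cl_circle a' b c' z0 ->
  tangent_at (cl_circle a b c) (cl_circle a' b c') z0.
Proof.
move=> Kz0 Lz0; split=> //; split=> //.
have [[<- <-] | nac] := eqVneq (a, c) (a', c'); first by left.
right.
have meet z : cl_circle a b c z /\ cl_circle a' b c' z ->
    (exists2 x, z = (Some x, cl_quad a b c x) &
                cl_quad (a - a') 0 (c - c') x = 0) \/ (z = (None, a) /\ a = a').
  by move/cl_circle_meetP; rewrite subrr.
have [ea | na] := eqVneq a a'.
  have inf z : cl_circle a b c z /\ cl_circle a' b c' z -> z = (None, a).
    move/meet => [[x _] | [-> //]].
    rewrite ea /cl_quad !subrr !mul0r !add0r => /eqP.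
    rewrite subr_eq0 => /eqP ec.
    by rewrite ea ec eqxx in nac.
  by move=> z /inf ->; apply/esym/inf.
have fin z : cl_circle a b c z /\ cl_circle a' b c' z ->
    exists2 x, z = (Some x, cl_quad a b c x) &
               cl_quad (a - a') 0 (c - c') x = 0.
  by move/meet => [// | [_ ea]]; rewrite ea eqxx in na.
move=> z /fin [x -> qx]; have [x0 -> q0] := fin _ (conj Kz0 Lz0).
have := cl_quad_shift (a - a') 0 (c - c') x0 (x - x0).
rewrite (addrC x0) subrK qx q0 add0r addr0 => /esym/eqP.
by rewrite !mulf_eq0 !subr_eq0 (negPf na) /= orbb => /eqP ->.
Qed.

End ClassicalPlane.

Lemma tangent_at_comp (T U : Type) (f : T -> U) (K L : U -> Prop) (p : T) :
  bijective f -> tangent_at (K \o f) (L \o f) p <-> tangent_at K L (f p).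
Proof.
move=> [g fK gK]; split=> -[Kp [Lp KL]]; do 2 split=> //.
  case: KL => [KLf | uniq_p]; [left | right].
    apply: functional_extensionality => z; rewrite -[z]gK.
    exact: (congr1 (fun N => N (g z)) KLf).
  by move=> z [Kz Lz]; rewrite -[z]gK; congr f; apply: uniq_p; rewrite /= gK.
case: KL => [-> | uniq_fp]; [left | right] => //.
by move=> x Kx_Lx; apply: (can_inj fK); apply: uniq_fp.
Qed.

Lemma iso_classical_circle (P : Type) (C : (P -> Prop) -> Prop)
    (par : P -> P -> Prop) (F : fieldType) (f : P -> cl_point F)
    (K : P -> Prop) :
  iso_classical C par f -> C K -> exists a b c, K = cl_circle a b c \o f.
Proof.
move=> [[g fK _] [_ circleC]] /circleC [a [b [c imK]]]; exists a, b, c.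
apply: functional_extensionality => x; apply: propositional_extensionality.
split=> [Kx | Kfx]; first by rewrite /= -imK; exists x.
by move: Kfx; rewrite /= -imK => -[y [Ky /(can_inj fK) <-]].
Qed.

Theorem proposition1p1 (P : Type) (C : (P -> Prop) -> Prop)
    (par : P -> P -> Prop) :
  laguerre_plane C par -> miquelian C par -> plane_char C par 2 ->
  forall (K L M : P -> Prop) (p : P),
    C K -> C L -> C M -> K p -> L p ->
    tangent K M -> tangent L M -> tangent_at K L p.
Proof.
move=> _ _ [F [f [/GRing.pcharf0 two0 iso]]] K L M p CK CL CM Kp Lp TK TL.
have [bij_f _] := iso.
have [aK [bK [cK eK]]] := iso_classical_circle iso CK.
have [aL [bL [cL eL]]] := iso_classical_circle iso CL.
have [aM [bM [cM eM]]] := iso_classical_circle iso CM.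
subst K L M.
have lin_M a b c :
    tangent (cl_circle a b c \o f) (cl_circle aM bM cM \o f) -> b = bM.
  by move=> [q /(tangent_at_comp _ _ _ bij_f) /(cl_tangent_at_same_lin two0)].
rewrite (lin_M _ _ _ TK) (lin_M _ _ _ TL) in Kp Lp *.
exact/(tangent_at_comp _ _ _ bij_f)/(cl_same_lin_tangent_at two0).
Qed.
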